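(* Let $k\geq 2$, let $\mathbb Z_0=\mathbb Z\setminus\{0\}$ and let $\{\lambda_j\}_{j\in\mathbb Z_0}$ be positive numbers. If there is a sequence of positive numbers $\{z_j\}_{j\in\mathbb Z_0}$ satisfying $$z_i=\lambda_i\Bigl(\frac{1}{1+\sum_{j\in\mathbb Z_0}z_j}\Bigr)^{k},\qquad i\in\mathbb Z_0,$$ then both series $\sum_{j\in\mathbb Z_0}z_j$ and $\sum_{j\in\mathbb Z_0}\lambda_j$ converge.
   Context: If $\sum_j z_j=+\infty$, the right-hand side is interpreted as $0$. *)

From HB Require Import structures.
From mathcomp Require Import all_boot all_order all_algebra.
From mathcomp Require Import all_classical all_reals all_analysis.
Set Implicit Arguments. Unset Strict Implicit. Unset Printing Implicit Defensive.
Import Order.TTheory GRing.Theory Num.Theory.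
Local Open Scope classical_set_scope.
Local Open Scope ring_scope.

Definition Z0 : set int := [set j : int | j != 0].

(* Unordered (extended-real) sum over Z_0 of a real family. For nonnegative
   families this is the sum of the series; it is finite iff the series converges. *)
Definition sumZ0 (R : realType) (a : int -> R) : \bar R :=
  (\esum_(j in Z0) (a j)%:E)%E.

Definition inv1p (R : realType) (S : \bar R) : R :=
  if S == +oo%E then 0 else 1 / (1 + fine S).

From HB Require Import structures.
From mathcomp Require Import all_boot all_order all_algebra.
From mathcomp Require Import all_classical all_reals all_analysis.
Import Order.TTheory GRing.Theory Num.Theory.
Local Open Scope ring_scope.

(* If S = sum z were infinite, the fixed-point equation would force
   z_i = lambda_i * 0^k = 0, contradicting z_i > 0.  So S is finite, and then
   lambda_i = (1 + S)^k z_i is dominated by a constant multiple of the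
   summable family z. *)

Section EsumDomination.
Context {R : realType} {T : choiceType} {D : set T}.

Lemma esumMn_lt_pinfty (a : T -> R) n :
  (forall x, D x -> 0 <= a x) -> (\esum_(x in D) (a x)%:E < +oo)%E ->
  (\esum_(x in D) (a x *+ n)%:E < +oo)%E.
Proof.
move=> a_ge0 a_fin; elim: n => [|n IHn].
  by rewrite esum1 // => x _; rewrite mulr0n.
rewrite (eq_esum (b := fun x => (a x)%:E + (a x *+ n)%:E)%E); last first.
  by move=> x _; rewrite mulrS EFinD.
rewrite esumD; first exact: lte_add_pinfty.
  by move=> x Dx; rewrite lee_fin a_ge0.
by move=> x Dx; rewrite lee_fin mulrn_wge0 // a_ge0.
Qed.

Lemma esum_le_scale_lt_pinfty (a b : T -> R) (c : R) :
  (forall x, D x -> 0 <= b x) -> (forall x, D x -> a x <= c * b x) ->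
  (\esum_(x in D) (b x)%:E < +oo)%E -> (\esum_(x in D) (a x)%:E < +oo)%E.
Proof.
move=> b_ge0 a_le b_fin.
set n := (Num.truncn c).+1.
have c_le_n : c <= n%:R by apply/ltW/truncnS_gt.
apply: (le_lt_trans _ (esumMn_lt_pinfty _ n b_ge0 b_fin)).
apply: le_esum => x Dx; rewrite lee_fin -mulr_natl.
by apply: le_trans (a_le x Dx) _; rewrite ler_wpM2r // b_ge0.
Qed.

End EsumDomination.

Section FixedPoint.
Context {R : realType} {k : nat} {lambda z : int -> R}.
Hypothesis k_gt0 : (0 < k)%N.
Hypothesis z_gt0 : forall j : int, j != 0 -> 0 < z j.
Hypothesis fixed_point :
  forall i : int, i != 0 -> z i = lambda i * inv1p (sumZ0 z) ^+ k.

Lemma sumZ0_fixed_point_lt_pinfty : (sumZ0 z < +oo)%E.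
Proof.
rewrite ltey; apply/eqP => S_inf.
have := z_gt0 1 isT.
by rewrite fixed_point // /inv1p S_inf eqxx expr0n gtn_eqF // mulr0 ltxx.
Qed.

Lemma lambda_fixed_point (i : int) :
  i != 0 -> lambda i = (1 + fine (sumZ0 z)) ^+ k * z i.
Proof.
move=> i_neq0; have S_fin := sumZ0_fixed_point_lt_pinfty.
have S_ge0 : (0 <= sumZ0 z)%E.
  by apply: esum_ge0 => j j_neq0; rewrite lee_fin ltW // z_gt0.
have one_plus_S_gt0 : 0 < 1 + fine (sumZ0 z) by rewrite ltr_wpDr // fine_ge0.
rewrite fixed_point // /inv1p (lt_eqF S_fin) mulrCA -exprMn.
by rewrite mul1r mulfV ?gt_eqF // expr1n mulr1.
Qed.

End FixedPoint.

Theorem mainTheorem3 (R : realType) (k : nat) (lambda z : int -> R) :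
  (2 <= k)%N ->
  (forall j : int, j != 0 -> 0 < lambda j) ->
  (forall j : int, j != 0 -> 0 < z j) ->
  (forall i : int, i != 0 -> z i = lambda i * (inv1p (sumZ0 z)) ^+ k) ->
  (sumZ0 z < +oo)%E /\ (sumZ0 lambda < +oo)%E.
Proof.
move=> k_ge2 _ z_gt0 fixed_point.
have k_gt0 : (0 < k)%N by apply: leq_trans k_ge2.
have S_fin := sumZ0_fixed_point_lt_pinfty k_gt0 z_gt0 fixed_point.
split=> //.
apply: (esum_le_scale_lt_pinfty _ _ ((1 + fine (sumZ0 z)) ^+ k)) S_fin.
- by move=> j j_neq0; exact/ltW/z_gt0.
- by move=> j j_neq0; rewrite (lambda_fixed_point k_gt0 z_gt0 fixed_point).
Qed.
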